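(* Let $d\ge2$, $F\in(0,1)$ with $F\ne\frac12$, and let $\rho_0=F|\mathrm{GHZ}_d\rangle\langle\mathrm{GHZ}_d|+(1-F)Z_1|\mathrm{GHZ}_d\rangle\langle\mathrm{GHZ}_d|Z_1$, where $|\mathrm{GHZ}_d\rangle=(|0\cdots0\rangle+|1\cdots1\rangle)/\sqrt2$ and $Z_1$ is $\sigma_z$ on the first qubit. Let $\rho_x=U(x)\rho_0U(x)^\dagger$ with $U(x)=\exp[-\frac i2\sum_{i=1}^d x_i\sigma_z^{(i)}]$, and for $\alpha\in\mathbb{R}$ let $M(\alpha)=O(\alpha)^{\otimes d}$, $O(\alpha)=e^{i\alpha}|1\rangle\langle0|+e^{-i\alpha}|0\rangle\langle1|$. For $\alpha$ with $\sin(d\alpha)\neq0$ the error-propagation variance at $x=0$, $$V(\alpha)=\frac{\langle M(\alpha)^2\rangle-\langle M(\alpha)\rangle^2}{\big|v_1\cdot\nabla_x\langle M(\alpha)\rangle\big|^2}\Bigg|_{x=0},\quad \langle A\rangle=\mathrm{Tr}(\rho_xA),\ v_1=\tfrac{1}{\sqrt d}(1,\dots,1)^T,$$ equals $\frac{1-(2F-1)^2\cos^2(d\alpha)}{d(2F-1)^2\sin^2(d\alpha)}$; it is minimized exactly at $\alpha=\frac{(2l+1)\pi}{2d}$, $l\in\mathbb{Z}$, and the minimum value is $\frac{1}{d(2F-1)^2}$, which equals $1/\big(d(1-C)\big)$ with $C=4F(1-F)$, the inverse of the quantum Fisher information $d(1-C)$ for $\theta_1=v_1^Tx$ of this state.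
   Context: For a GHZ-diagonal $d$-qubit state with eigenvalues $\lambda^\pm_s$ on $|G^\pm_s\rangle=(|s\rangle\pm|\bar s\rangle)/\sqrt2$ (one representative $s$ per complementary pair of bit strings), $C=\sum_s\frac{4\lambda^+_s\lambda^-_s}{\lambda^+_s+\lambda^-_s}$ with terms having $\lambda^+_s+\lambda^-_s=0$ set to $0$; for the state $\rho_0$ above this gives $C=4F(1-F)$. The quantum Fisher information for $\theta_1$ under the encoding $U(x)$ is $d(1-C)$, so the claim says this measurement saturates the quantum Cramér–Rao bound. *)

From HB Require Import structures.
From mathcomp Require Import all_boot all_order all_algebra.
From mathcomp Require Import all_classical all_reals all_analysis.
From mathcomp Require Import complex.
Set Implicit Arguments.
Unset Strict Implicit.
Unset Printing Implicit Defensive.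
Import Order.TTheory GRing.Theory Num.Theory.
Local Open Scope ring_scope.

Section GHZ.
Variables (R : realType) (d : nat).
Local Notation C := (R[i]).

(* computational basis of d qubits: bit strings s = (s_1,...,s_d),
   qubit i (0-based index) is [tnth s i] *)
Definition basis := (d.-tuple bool).

(* operators on (C^2)^{\otimes d}, given by their matrix entries <s|A|t> *)
Definition op := basis -> basis -> C.

Definition op_mul (A B : op) : op := fun s t => \sum_(k : basis) A s k * B k t.
Definition op_adj (A : op) : op := fun s t => conjc (A t s).
Definition op_add (A B : op) : op := fun s t => A s t + B s t.
Definition op_scale (c : C) (A : op) : op := fun s t => c * A s t.
Definition op_trace (A : op) : C := \sum_(s : basis) A s s.
Definition diag_op (f : basis -> C) : op := fun s t => if s == t then f s else 0.

Definition rC (r : R) : C := Complex r 0.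
Definition expi (th : R) : C := Complex (cos th) (sin th).

Definition zeros : basis := [tuple of nseq d false].
Definition ones : basis := [tuple of nseq d true].

Definition ghz (s : basis) : C :=
  if (s == zeros) || (s == ones) then rC (Num.sqrt 2)^-1 else 0.

Definition proj (psi : basis -> C) : op := fun s t => psi s * conjc (psi t).

(* eigenvalue of sigma_z on qubit i in basis state s: +1 for |0>, -1 for |1> *)
Definition zval (i : 'I_d) (s : basis) : R := if tnth s i then -1 else 1.

Definition Z1 : op := diag_op (fun s => if nth false s 0 then -1 else 1).

Definition rho0 (F : R) : op :=
  op_add (op_scale (rC F) (proj ghz))
         (op_scale (rC (1 - F)) (op_mul Z1 (op_mul (proj ghz) Z1))).

(* U(x) = exp[-(i/2) sum_i x_i sigma_z^(i)]; this operator is diagonal in the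
   computational basis, with entry exp[-(i/2) sum_i x_i z_i(s)] *)
Definition Uenc (x : 'I_d -> R) : op :=
  diag_op (fun s => expi (- (\sum_(i < d) x i * zval i s) / 2)).

Definition rho_x (F : R) (x : 'I_d -> R) : op :=
  op_mul (Uenc x) (op_mul (rho0 F) (op_adj (Uenc x))).

Definition Oa (a : R) (b c : bool) : C :=
  match b, c with
  | true, false => expi a
  | false, true => expi (- a)
  | _, _ => 0
  end.

Definition Mop (a : R) : op := fun s t => \prod_(i < d) Oa a (tnth s i) (tnth t i).

(* <A> = Tr(rho_x A) (real part; it is real for Hermitian A) *)
Definition expval (F : R) (A : op) (x : 'I_d -> R) : R :=
  complex.Re (op_trace (op_mul (rho_x F x) A)).

Definition partial (f : ('I_d -> R) -> R) (i : 'I_d) (x : 'I_d -> R) : R :=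
  derive1 (fun t : R => f (fun j => x j + (if j == i then t else 0))) 0.

Definition v1 (i : 'I_d) : R := (Num.sqrt d%:R)^-1.

Definition v1_grad (f : ('I_d -> R) -> R) (x : 'I_d -> R) : R :=
  \sum_(i < d) v1 i * partial f i x.

Definition x0 : 'I_d -> R := fun _ => 0.

Definition Verr (F a : R) : R :=
  (expval F (op_mul (Mop a) (Mop a)) x0 - (expval F (Mop a) x0) ^+ 2)
  / (`| v1_grad (expval F (Mop a)) x0 |) ^+ 2.

Definition compl (s : basis) : basis := [tuple of map negb s].
Definition ghz_pm (sg : bool) (s : basis) : basis -> C := fun t =>
  rC (Num.sqrt 2)^-1 *
  ((if t == s then 1 else 0) + (if sg then 1 else -1) * (if t == compl s then 1 else 0)).

Definition op_exp (A : op) (psi : basis -> C) : C :=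
  \sum_(s : basis) \sum_(t : basis) conjc (psi s) * A s t * psi t.

(* C = sum_s 4 l+_s l-_s/(l+_s + l-_s), one representative s per complementary
   pair (the one with first bit 0), terms with l+ + l- = 0 set to 0;
   l^pm_s = <G^pm_s|rho|G^pm_s> are the eigenvalues of a GHZ-diagonal rho. *)
Definition ghzC (rho : op) : R :=
  \sum_(s : basis | ~~ nth false s 0)
    (let lp := complex.Re (op_exp rho (ghz_pm true s)) in
     let lm := complex.Re (op_exp rho (ghz_pm false s)) in
     if lp + lm == 0 then 0 else 4 * lp * lm / (lp + lm)).

Definition qfi (rho : op) : R := d%:R * (1 - ghzC rho).

End GHZ.

(* Both rho_x and M(alpha) live on span{|0...0>, |1...1>}.  There rho_x has
   diagonal entries 1/2 and coherences (2F-1)/2 e^(-+ i sum_i x_i), M(alpha)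
   exchanges the two strings with phases e^(-+ i d alpha), and M(alpha)^2 is the
   identity.  Hence <M> = (2F-1) cos(d alpha - sum_i x_i) and <M^2> = 1, which gives
   the closed form of V.  With k = (2F-1)^2 and cos^2 + sin^2 = 1 it can be rewritten
   V = 1/(dk) + (1-k) cos^2(d alpha) / (dk sin^2(d alpha)), so the minimum 1/(dk) is
   attained exactly where cos(d alpha) = 0.  Only the GHZ pair {0...0, 1...1}
   carries weight in rho_0, with eigenvalues F and 1-F, so C = 4F(1-F) and
   d(1-C) = dk. *)

From Pilot Require Import Defs.
From HB Require Import structures.
From mathcomp Require Import all_boot all_order all_algebra.
From mathcomp Require Import all_classical all_reals all_analysis.
From mathcomp Require Import complex.
From mathcomp Require Import ring lra.
Set Implicit Arguments.
Unset Strict Implicit.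
Unset Printing Implicit Defensive.
Import Order.TTheory GRing.Theory Num.Theory.
Local Open Scope ring_scope.

Section Trigonometry.
Variable R : realType.

Lemma sin_natpi (n : nat) : sin (n%:R * pi) = 0 :> R.
Proof.
elim: n => [|n IHn]; first by rewrite mul0r sin0.
by rewrite -natr1 mulrDl mul1r sinDpi IHn oppr0.
Qed.

Lemma sin_intpi (l : int) : sin (l%:~R * pi) = 0 :> R.
Proof.
case: l => n; first exact: sin_natpi.
by rewrite NegzE mulrNz mulNr sinN sin_natpi oppr0.
Qed.

Lemma sin_eq0P (r : R) : sin r = 0 <-> exists l : int, r = l%:~R * pi.
Proof.
split=> [sr0|[l ->]]; last exact: sin_intpi.
have pi_gt0 := pi_gt0 R.
set l := Num.floor (r / pi); exists l.
have /andP[lr rl] := floor_itv (r / pi).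
rewrite -/l ler_pdivlMr // intrD ltr_pdivrMr // mulrDl mul1r in lr rl.
set u := r - l%:~R * pi.
have u_ge0 : 0 <= u by rewrite subr_ge0.
have u_ltpi : u < pi by rewrite ltrBlDl.
have su0 : sin u = 0 by rewrite sinB sr0 sin_intpi mul0r mulr0 subrr.
apply/eqP; rewrite -subr_eq0; apply/negPn/negP => u_neq0.
have : 0 < sin u by apply: sin_gt0_pi; rewrite u_ltpi lt0r u_neq0 u_ge0.
by rewrite su0 ltxx.
Qed.

Lemma cos_mul_eq0P (n a : R) : n != 0 ->
  cos (n * a) = 0 <-> exists l : int, a = (2 * l%:~R + 1) * pi / (2 * n).
Proof.
move=> n_neq0.
have -> : (cos (n * a) = 0) = (sin (n * a - pi / 2) = 0).
  rewrite sinBpihalf; apply/propext.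
  by split=> [->|/eqP]; rewrite ?oppr0 // oppr_eq0 => /eqP.
rewrite sin_eq0P; split=> -[l la]; exists l.
  by rewrite -[a](mulKf n_neq0) -[n * a](subrK (pi / 2)) la; field.
by rewrite la; field.
Qed.

Lemma derive1_cos_shift (k c : R) :
  derive1 (fun t : R => k * cos (c - t)) 0 = k * sin c.
Proof.
have -> : (fun t : R => k * cos (c - t)) = k \*: (cos c \*: cos + sin c \*: sin).
  by apply/funext => t; rewrite cosB.
rewrite derive1E derive_val.
by rewrite sin0 cos0 oppr0 scaler0 add0r /GRing.scale /= mulr1.
Qed.

End Trigonometry.

Lemma variance_leif (R : realFieldType) (n k c s : R) :
  0 < n -> 0 < k < 1 -> s != 0 -> c ^+ 2 + s ^+ 2 = 1 ->
  (n * k)^-1 <= (1 - k * c ^+ 2) / (n * k * s ^+ 2) ?= iff (c == 0).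
Proof.
move=> n_gt0 /andP[k_gt0 k_lt1] s_neq0 cs1.
have nks_gt0 : 0 < n * k * s ^+ 2.
  by apply: mulr_gt0; [exact: mulr_gt0 | rewrite exprn_even_gt0 //= s_neq0].
have -> : (1 - k * c ^+ 2) / (n * k * s ^+ 2)
          = (n * k)^-1 + (1 - k) * c ^+ 2 / (n * k * s ^+ 2).
  by rewrite -{1}cs1; field; rewrite s_neq0 !lt0r_neq0.
split.
  rewrite lerDl divr_ge0 ?(ltW nks_gt0) // mulr_ge0 ?sqr_ge0 //.
  by rewrite subr_ge0 ltW.
rewrite -{1}[(n * k)^-1]addr0 (inj_eq (addrI _)) eq_sym.
rewrite mulf_eq0 invr_eq0 (gt_eqF nks_gt0) orbF.
by rewrite mulf_eq0 subr_eq0 (gt_eqF k_lt1) sqrf_eq0.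
Qed.

Section Phases.
Variable R : realType.

Lemma expiD (a b : R) : expi a * expi b = expi (a + b).
Proof. by rewrite /expi cosD sinD; simpc; congr Complex; ring. Qed.

Lemma expi0 : expi (0 : R) = 1.
Proof. by rewrite /expi cos0 sin0. Qed.

Lemma conjc_expi (a : R) : conjc (expi a) = expi (- a).
Proof. by rewrite /expi cosN sinN. Qed.

Lemma expiMn (a : R) (n : nat) : expi a ^+ n = expi (n%:R * a).
Proof.
elim: n => [|n IHn]; first by rewrite expr0 mul0r expi0.
by rewrite exprS IHn expiD -natr1 mulrDl mul1r addrC.
Qed.

Lemma ReD (x y : R[i]) : complex.Re (x + y) = complex.Re x + complex.Re y.
Proof. by case: x; case: y. Qed.

Lemma Re_rC_expi (c e : R) : complex.Re (rC c * expi e) = c * cos e.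
Proof. by rewrite /rC /expi; simpc. Qed.

Lemma conjc_rC (c : R) : conjc (rC c) = rC c.
Proof. by rewrite /rC /= oppr0. Qed.

Lemma rCD (a b : R) : rC a + rC b = rC (a + b).
Proof. by rewrite /rC; simpc. Qed.

Lemma rCM (a b : R) : rC a * rC b = rC (a * b).
Proof. by rewrite /rC; simpc. Qed.

End Phases.

Section GHZBlock.
Variables (R : realType) (d : nat).
Local Notation basis := (Defs.basis d).
Local Notation op := (Defs.op R d).
Local Notation z := (zeros d).
Local Notation o := (ones d).

Lemma tnth_zeros i : tnth z i = false. Proof. exact: tnth_nseq. Qed.

Lemma tnth_ones i : tnth o i = true. Proof. exact: tnth_nseq. Qed.

Lemma nth_zeros0 : nth false z 0 = false.
Proof. by rewrite /= nth_nseq if_same. Qed.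

Lemma compl_zeros : compl z = o.
Proof. by apply: eq_from_tnth => i; rewrite tnth_map tnth_zeros tnth_ones. Qed.

Lemma compl_ones : compl o = z.
Proof. by apply: eq_from_tnth => i; rewrite tnth_map tnth_zeros tnth_ones. Qed.

Lemma complK : involutive (@compl d).
Proof. by move=> s; apply: eq_from_tnth => i; rewrite !tnth_map negbK. Qed.

Lemma mul_diag_op_l (f : basis -> R[i]) (A : op) s t :
  op_mul (diag_op f) A s t = f s * A s t.
Proof.
rewrite /op_mul (bigD1 s) //= /diag_op eqxx big1 ?addr0 // => k.
by rewrite eq_sym => /negbTE ->; rewrite mul0r.
Qed.

Lemma mul_diag_op_r (f : basis -> R[i]) (A : op) s t :
  op_mul A (diag_op f) s t = A s t * f t.
Proof.
rewrite /op_mul (bigD1 t) //= /diag_op eqxx big1 ?addr0 // => k.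
by move=> /negbTE ->; rewrite mulr0.
Qed.

Lemma adj_diag_op (f : basis -> R[i]) :
  op_adj (diag_op f) = diag_op (fun s => conjc (f s)).
Proof.
apply/funext => s; apply/funext => t; rewrite /op_adj /diag_op eq_sym.
by case: eqP => [->|_]; rewrite ?conjc0.
Qed.

Hypothesis d_gt0 : (0 < d)%N.

Lemma zeros_neq_ones : z != o.
Proof.
apply/eqP => /(congr1 (fun s : basis => tnth s (Ordinal d_gt0))).
by rewrite tnth_zeros tnth_ones.
Qed.

Lemma ones_neq_zeros : o != z.
Proof. by rewrite eq_sym zeros_neq_ones. Qed.

Lemma nth_ones0 : nth false o 0 = true.
Proof. by rewrite /= nth_nseq d_gt0. Qed.

Definition ghz_support (s : basis) : bool := (s == z) || (s == o).

Lemma ghz_support_zeros : ghz_support z.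
Proof. by rewrite /ghz_support eqxx. Qed.

Lemma ghz_support_ones : ghz_support o.
Proof. by rewrite /ghz_support eqxx orbT. Qed.

Definition ghz_block (f : basis -> basis -> R[i]) : Prop :=
  forall s t, ~~ ghz_support s || ~~ ghz_support t -> f s t = 0.

Lemma sum_ghz_support (f : basis -> R[i]) :
  (forall s, ~~ ghz_support s -> f s = 0) -> \sum_s f s = f z + f o.
Proof.
move=> f0; rewrite (bigD1 z) // (bigD1 o) /=; last exact: ones_neq_zeros.
by rewrite big1 ?addr0 // => s /andP[sz so]; apply: f0; rewrite negb_or sz.
Qed.

Lemma sum2_ghz_block (f : basis -> basis -> R[i]) : ghz_block f ->
  \sum_s \sum_t f s t = (f z z + f z o) + (f o z + f o o).
Proof.
move=> f0; rewrite sum_ghz_support => [|s s_out]; last first.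
  by rewrite big1 // => t _; rewrite f0 ?s_out.
by rewrite !sum_ghz_support // => t t_out; rewrite f0 // t_out orbT.
Qed.

Lemma trace_mul_ghz_block (A B : op) : ghz_block A ->
  op_trace (op_mul A B) =
  (A z z * B z z + A z o * B o z) + (A o z * B z o + A o o * B o o).
Proof. by move=> A0; apply: sum2_ghz_block => s t st; rewrite A0 ?mul0r. Qed.

Lemma op_exp_ghz_block (A : op) (psi : basis -> R[i]) : ghz_block A ->
  op_exp A psi =
  (conjc (psi z) * A z z * psi z + conjc (psi z) * A z o * psi o)
  + (conjc (psi o) * A o z * psi z + conjc (psi o) * A o o * psi o).
Proof. by move=> A0; apply: sum2_ghz_block => s t st; rewrite A0 ?mulr0 ?mul0r. Qed.

Lemma ghz_out s : ~~ ghz_support s -> ghz R s = 0.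
Proof. by rewrite /ghz /ghz_support => /negbTE ->. Qed.

Lemma invsqrt2_sqr : (Num.sqrt 2)^-1 * (Num.sqrt 2)^-1 = 2^-1 :> R.
Proof. by rewrite -invfM -expr2 sqr_sqrtr. Qed.

Lemma proj_ghz s t :
  ghz_support s -> ghz_support t -> Defs.proj (@ghz R d) s t = rC 2^-1.
Proof.
by rewrite /Defs.proj /ghz /ghz_support => -> ->; rewrite conjc_rC rCM invsqrt2_sqr.
Qed.

Lemma Z1E : @Z1 R d = diag_op (fun s => rC (if nth false s 0 then -1 else 1)).
Proof.
apply/funext => s; apply/funext => t; rewrite /Z1 /diag_op.
by case: ifP => // _; case: ifP => _; rewrite /rC; simpc.
Qed.

Variable F : R.

Lemma rho0_ghz_block : ghz_block (rho0 F).
Proof.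
move=> s t st; rewrite /rho0 /op_add /op_scale mul_diag_op_l mul_diag_op_r /Defs.proj.
by case/orP: st => /ghz_out ->; rewrite ?conjc0 !(mul0r, mulr0, addr0).
Qed.

Lemma rho0_block s t : ghz_support s -> ghz_support t ->
  rho0 F s t = rC (if s == t then 2^-1 else (2 * F - 1) / 2).
Proof.
move=> s_in t_in; rewrite /rho0 /op_add /op_scale Z1E.
rewrite mul_diag_op_l mul_diag_op_r proj_ghz // !rCM rCD; congr rC.
have [z_neq_o o_neq_z] := (negbTE zeros_neq_ones, negbTE ones_neq_zeros).
by move: s_in t_in => /orP[]/eqP-> /orP[]/eqP->;
  rewrite ?eqxx ?z_neq_o ?o_neq_z ?nth_zeros0 ?nth_ones0 /=; field.
Qed.

End GHZBlock.

Section Expectations.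
Variables (R : realType) (d : nat) (F a : R).
Hypothesis d_gt0 : (0 < d)%N.
Local Notation op := (Defs.op R d).
Local Notation z := (zeros d).
Local Notation o := (ones d).
Local Notation M := (@Mop R d a).

Lemma rho_xE (x : 'I_d -> R) s t : rho_x F x s t =
  rho0 F s t * expi ((\sum_i x i * zval R i t - \sum_i x i * zval R i s) / 2).
Proof.
rewrite /rho_x /Uenc mul_diag_op_l adj_diag_op mul_diag_op_r conjc_expi.
by rewrite mulrCA expiD; congr (_ * expi _); ring.
Qed.

Lemma sum_zval_zeros (x : 'I_d -> R) : \sum_i x i * zval R i z = \sum_i x i.
Proof. by apply: eq_bigr => i _; rewrite /zval tnth_zeros mulr1. Qed.

Lemma sum_zval_ones (x : 'I_d -> R) : \sum_i x i * zval R i o = - \sum_i x i.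
Proof. by rewrite -sumrN; apply: eq_bigr => i _; rewrite /zval tnth_ones mulrN1. Qed.

Lemma trace_mul_rho_x (x : 'I_d -> R) (B : op) :
  op_trace (op_mul (rho_x F x) B) =
  rC 2^-1 * (B z z + B o o)
  + rC ((2 * F - 1) / 2) * (expi (- \sum_i x i) * B o z + expi (\sum_i x i) * B z o).
Proof.
rewrite trace_mul_ghz_block //; last first.
  by move=> s t st; rewrite rho_xE rho0_ghz_block ?mul0r.
rewrite !rho_xE !rho0_block ?ghz_support_zeros ?ghz_support_ones // !eqxx.
rewrite (negbTE (zeros_neq_ones d_gt0)) (negbTE (ones_neq_zeros d_gt0)).
rewrite sum_zval_zeros sum_zval_ones !subrr mul0r expi0.
set X := \sum_i x i.
have -> : (- X - X) / 2 = - X by field.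
have -> : (X - - X) / 2 = X by field.
ring.
Qed.

Lemma Mop_zeros_ones : M z o = expi (- (d%:R * a)).
Proof.
rewrite /Mop (eq_bigr (fun _ => expi (- a))) => [|i _]; last first.
  by rewrite tnth_zeros tnth_ones.
by rewrite prodr_const card_ord expiMn mulrN.
Qed.

Lemma Mop_ones_zeros : M o z = expi (d%:R * a).
Proof.
rewrite /Mop (eq_bigr (fun _ => expi a)) => [|i _]; last first.
  by rewrite tnth_zeros tnth_ones.
by rewrite prodr_const card_ord expiMn.
Qed.

Lemma Mop_zeros t : t != o -> M z t = 0.
Proof.
move=> t_neq; have /existsP[i ti] : [exists i, ~~ tnth t i].
  apply: contraR t_neq => /existsPn t1; apply/eqP/eq_from_tnth => i.
  by rewrite tnth_ones; apply/negPn.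
by rewrite /Mop (bigD1 i) //= tnth_zeros (negbTE ti) mul0r.
Qed.

Lemma Mop_ones t : t != z -> M o t = 0.
Proof.
move=> t_neq; have /existsP[i ti] : [exists i, tnth t i].
  apply: contraR t_neq => /existsPn t0; apply/eqP/eq_from_tnth => i.
  by rewrite tnth_zeros; apply/negbTE.
by rewrite /Mop (bigD1 i) //= tnth_ones ti mul0r.
Qed.

Lemma mul_Mop_zeros (B : op) t : op_mul M B z t = M z o * B o t.
Proof.
rewrite /op_mul (bigD1 o) //= big1 ?addr0 // => k k_neq.
by rewrite Mop_zeros ?mul0r.
Qed.

Lemma mul_Mop_ones (B : op) t : op_mul M B o t = M o z * B z t.
Proof.
rewrite /op_mul (bigD1 z) //= big1 ?addr0 // => k k_neq.
by rewrite Mop_ones ?mul0r.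
Qed.

Lemma expval_Mop (x : 'I_d -> R) :
  expval F M x = (2 * F - 1) * cos (d%:R * a - \sum_i x i).
Proof.
rewrite /expval trace_mul_rho_x (Mop_zeros (zeros_neq_ones d_gt0)).
rewrite (Mop_ones (ones_neq_zeros d_gt0)) Mop_zeros_ones Mop_ones_zeros.
rewrite !expiD addr0 mulr0 add0r mulrDr ReD !Re_rC_expi.
set X := \sum_i x i; rewrite [- X + _]addrC -[X - _]opprB cosN.
by field.
Qed.

Lemma expval_Mop_sqr (x : 'I_d -> R) : expval F (op_mul M M) x = 1.
Proof.
rewrite /expval trace_mul_rho_x !mul_Mop_zeros !mul_Mop_ones.
rewrite (Mop_zeros (zeros_neq_ones d_gt0)) (Mop_ones (ones_neq_zeros d_gt0)).
rewrite Mop_zeros_ones Mop_ones_zeros !expiD addNr addrN expi0 !mulr0 !addr0.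
by rewrite /rC; simpc => /=; field.
Qed.

End Expectations.

Section Variance.
Variables (R : realType) (d : nat) (F a : R).
Hypothesis d_gt0 : (0 < d)%N.
Local Notation M := (@Mop R d a).

Lemma partial_expval_Mop i :
  partial (expval F M) i (@x0 R d) = (2 * F - 1) * sin (d%:R * a).
Proof.
rewrite /partial -derive1_cos_shift; congr derive1; apply/funext => t.
rewrite expval_Mop // (eq_bigr (fun j => if j == i then t else 0)) => [|j _].
  by rewrite -big_mkcond big_pred1_eq.
by rewrite /x0 add0r.
Qed.

Lemma v1_grad_expval_Mop :
  v1_grad (expval F M) (@x0 R d) = Num.sqrt d%:R * ((2 * F - 1) * sin (d%:R * a)).
Proof.
rewrite /v1_grad (eq_bigr (fun=> (Num.sqrt d%:R)^-1 * ((2 * F - 1) * sin (d%:R * a)))).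
  rewrite sumr_const card_ord -[_ *+ d]mulr_natl mulrA; congr (_ * _).
  rewrite -{1}(sqr_sqrtr (ler0n R d)) expr2 mulfK // sqrtr_eq0 -ltNge ltr0n //.
by move=> i _; rewrite partial_expval_Mop.
Qed.

Lemma VerrE : Verr d F a =
  (1 - (2 * F - 1) ^+ 2 * cos (d%:R * a) ^+ 2)
  / (d%:R * (2 * F - 1) ^+ 2 * sin (d%:R * a) ^+ 2).
Proof.
rewrite /Verr expval_Mop_sqr // expval_Mop // v1_grad_expval_Mop big1 // subr0.
by rewrite real_normK ?num_real // !exprMn sqr_sqrtr ?ler0n // !mulrA.
Qed.

Lemma Verr_leif : 0 < F < 1 -> F != 2^-1 -> sin (d%:R * a) != 0 ->
  (d%:R * (2 * F - 1) ^+ 2)^-1 <= Verr d F a ?= iff (cos (d%:R * a) == 0).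
Proof.
move=> /andP[F_gt0 F_lt1] F_neq_half sa; rewrite VerrE.
apply: variance_leif; rewrite ?ltr0n ?cos2Dsin2 //.
have F_neq : 2 * F - 1 != 0 by apply: contra F_neq_half => /eqP h; apply/eqP; lra.
by rewrite exprn_even_gt0 //= F_neq; nra.
Qed.

End Variance.

Section GHZCoefficient.
Variables (R : realType) (d : nat) (F : R).
Hypothesis d_gt0 : (0 < d)%N.
Local Notation z := (zeros d).
Local Notation o := (ones d).

Lemma ghz_pm_zeros_zeros sg : ghz_pm R sg z z = rC (Num.sqrt 2)^-1.
Proof.
by rewrite /ghz_pm eqxx compl_zeros (negbTE (zeros_neq_ones d_gt0)) mulr0 addr0 mulr1.
Qed.

Lemma ghz_pm_zeros_ones sg :
  ghz_pm R sg z o = rC ((if sg then 1 else -1) * (Num.sqrt 2)^-1).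
Proof.
rewrite /ghz_pm compl_zeros eqxx (negbTE (ones_neq_zeros d_gt0)) add0r mulr1 mulrC.
by case: sg; rewrite /rC; simpc.
Qed.

Lemma ghz_pm_out sg (s t : Defs.basis d) :
  ~~ ghz_support s -> ghz_support t -> ghz_pm R sg s t = 0.
Proof.
move=> s_out t_in; rewrite /ghz_pm.
have -> : (t == s) = false by apply: contraNF s_out => /eqP <-.
have -> : (t == compl s) = false.
  apply: contraNF s_out => /eqP ts; rewrite -[s]complK -ts.
  by move: t_in => /orP[]/eqP->; rewrite ?compl_zeros ?compl_ones /ghz_support eqxx ?orbT.
by rewrite mulr0 addr0 mulr0.
Qed.

Lemma rho0_ghz_eigenvalue sg :
  complex.Re (op_exp (rho0 F) (ghz_pm R sg z)) = if sg then F else 1 - F.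
Proof.
rewrite (op_exp_ghz_block d_gt0); last exact: rho0_ghz_block.
rewrite !rho0_block ?ghz_support_zeros ?ghz_support_ones // !eqxx.
rewrite (negbTE (zeros_neq_ones d_gt0)) (negbTE (ones_neq_zeros d_gt0)).
rewrite ghz_pm_zeros_zeros ghz_pm_zeros_ones !conjc_rC !rCM !rCD /=.
have g2 := invsqrt2_sqr R; set g := (Num.sqrt 2)^-1 in g2 *.
case: sg.
  by transitivity (g * g * (2 * F)); [field | rewrite g2; field].
by transitivity (g * g * (2 - 2 * F)); [field | rewrite g2; field].
Qed.

Lemma rho0_ghz_eigenvalue_out sg (s : Defs.basis d) :
  ~~ ghz_support s -> op_exp (rho0 F) (ghz_pm R sg s) = 0.
Proof.
move=> s_out; rewrite (op_exp_ghz_block d_gt0); last exact: rho0_ghz_block.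
rewrite !ghz_pm_out ?ghz_support_zeros ?ghz_support_ones //.
by rewrite conjc0 !(mulr0, mul0r, addr0).
Qed.

Lemma ghzC_rho0 : ghzC (@rho0 R d F) = 4 * F * (1 - F).
Proof.
rewrite /ghzC (bigD1 z) ?nth_zeros0 //= big1 => [|s /andP[s0 s_neq]].
  by rewrite addr0 !rho0_ghz_eigenvalue [F + _]addrC subrK oner_eq0 divr1.
have s_out : ~~ ghz_support s.
  by rewrite /ghz_support negb_or s_neq; apply: contraNneq s0 => ->; rewrite nth_ones0.
by rewrite !rho0_ghz_eigenvalue_out //= addr0 eqxx.
Qed.

Lemma qfi_rho0 : qfi (@rho0 R d F) = d%:R * (2 * F - 1) ^+ 2.
Proof. by rewrite /qfi ghzC_rho0; ring. Qed.

End GHZCoefficient.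

Theorem mainTheorem8 (R : realType) (d : nat) (F : R) :
  (2 <= d)%N -> 0 < F < 1 -> F != 2^-1 ->
  (* closed form of V(alpha) *)
  (forall a : R, sin (d%:R * a) != 0 ->
     Verr d F a =
     (1 - (2 * F - 1) ^+ 2 * (cos (d%:R * a)) ^+ 2)
     / (d%:R * (2 * F - 1) ^+ 2 * (sin (d%:R * a)) ^+ 2)) /\
  (* minimum value 1/(d(2F-1)^2) is a lower bound *)
  (forall a : R, sin (d%:R * a) != 0 ->
     (d%:R * (2 * F - 1) ^+ 2)^-1 <= Verr d F a) /\
  (* attained exactly at alpha = (2l+1)pi/(2d) *)
  (forall a : R,
     (sin (d%:R * a) != 0 /\ Verr d F a = (d%:R * (2 * F - 1) ^+ 2)^-1) <->
     (exists l : int, a = (2 * l%:~R + 1) * pi / (2 * d%:R))) /\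
  (* C = 4F(1-F) and minimum = 1/(d(1-C)) = inverse QFI *)
  ghzC (@rho0 R d F) = 4 * F * (1 - F) /\
  (d%:R * (2 * F - 1) ^+ 2)^-1 = (qfi (@rho0 R d F))^-1.
Proof.
move=> d_ge2 F01 F_neq_half; have d_gt0 : (0 < d)%N by apply: leq_trans d_ge2.
have leif a (sa : sin (d%:R * a) != 0) := Verr_leif d_gt0 F01 F_neq_half sa.
split; first by move=> a _; exact: VerrE.
split; first by move=> a sa; exact: leif.
split; last by split; [exact: ghzC_rho0 | rewrite qfi_rho0].
have d_neq0 : (d%:R : R) != 0 by rewrite pnatr_eq0 -lt0n.
move=> a; rewrite -(cos_mul_eq0P a d_neq0); split=> [[sa /eqP]|ca].
  by rewrite eq_sym (eq_leif (leif a sa)) => /eqP.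
have sa : sin (d%:R * a) != 0.
  apply/eqP => sa; move: (cos2Dsin2 (d%:R * a)).
  by rewrite ca sa !expr2 !mul0r addr0 => /esym/eqP; rewrite oner_eq0.
by split=> //; apply/esym/eqP; rewrite (eq_leif (leif a sa)) ca.
Qed.
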